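(* Let $\Delta\ge 4$ and let $T$ be a tree of order $n$ with maximum degree $\Delta$. For $1\le i\le\Delta$ let $n_i$ be the number of vertices of $T$ of degree $i$, and for $1\le p\le q\le \Delta$ let $m_{p,q}$ be the number of edges of $T$ joining a vertex of degree $p$ to a vertex of degree $q$. Put $t=\left\lfloor\frac{\Delta+3}{2}\right\rfloor$ and $E_{\le t}=\sum_{1\le p\le q\le t} m_{p,q}$. Assume that $\Delta$ divides $n$, that $n_{i'}=0$ for all integers $i'$ with $t<i'<\Delta$, and that $m_{\Delta,\Delta}=0$. Then $E_{\le t}\ge \Delta-1$. *)

From mathcomp Require Import all_boot.
Set Implicit Arguments. Unset Strict Implicit. Unset Printing Implicit Defensive.

Section Graph.
Variables (V : finType) (e : rel V).

Definition simple_graph := symmetric e /\ irreflexive e.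

Definition connected_graph := forall x y : V, connect e x y.

Definition acyclic_graph :=
  forall c : seq V, uniq c -> 2 < size c -> ~~ cycle e c.

Definition is_tree := [/\ simple_graph, connected_graph & acyclic_graph].

Definition deg (x : V) : nat := #|[set y | e x y]|.

Definition max_deg : nat := \max_(x : V) deg x.

Definition n_deg (i : nat) : nat := #|[set x : V | deg x == i]|.

Definition m_deg (p q : nat) : nat :=
  #|[set f : {set V} | [exists x, exists y,
      [&& e x y, f == [set x; y], deg x == p & deg y == q]]]|.

Definition E_le (t : nat) : nat :=
  \sum_(1 <= q < t.+1) \sum_(1 <= p < q.+1) m_deg p q.

End Graph.

From mathcomp Require Import all_boot.
From mathcomp Require Import zify.
Set Implicit Arguments. Unset Strict Implicit. Unset Printing Implicit Defensive.

(* A tree on n vertices has n - 1 edges: deleting an edge of a graph raises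
   its number of components by at most one, and by exactly one if the graph
   is acyclic.  Let D be the set of vertices of degree Delta.  As no edge joins
   two of them, the edges at D are pairwise distinct, so there are |D| Delta of
   them; since |D| Delta <= n - 1 and Delta divides n, even |D| Delta <= n - Delta.
   Hence at least Delta - 1 edges avoid D, and as no degree lies strictly
   between t and Delta, both ends of such an edge have degree at most t. *)

Lemma leq_card_bigcup (T : finType) (I : Type) (r : seq I) (P : pred I) (F : I -> {set T}) :
  #|\bigcup_(i <- r | P i) F i| <= \sum_(i <- r | P i) #|F i|.
Proof.
apply: (big_ind2 (fun (A : {set T}) n => #|A| <= n)) => [|A m B k leAm leBk|//].
  by rewrite cards0.
exact: leq_trans (leq_card_setU A B) (leq_add leAm leBk).
Qed.

Lemma mem_bigcup_seq (T : finType) (I : eqType) (r : seq I) (F : I -> {set T}) i x :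
  i \in r -> x \in F i -> x \in \bigcup_(j <- r) F j.
Proof. by move=> r_i Fi_x; rewrite (big_rem i) //= in_setU Fi_x. Qed.

Lemma dvdn_ltn_mul d a n : d %| n -> a * d < n -> a.+1 * d <= n.
Proof.
by case/dvdnP=> m ->; rewrite ltn_mul2r leq_mul2r => /andP[_ ->]; rewrite orbT.
Qed.

Section Forests.
Variable V : finType.
Implicit Types (F : {set {set V}}) (r : rel V).

Lemma set2_eq (x y u v : V) :
  u != v -> [set u; v] = [set x; y] -> (u, v) = (x, y) \/ (u, v) = (y, x).
Proof.
move=> neq_uv Euv; have uxy : u \in [set x; y] by rewrite -Euv set21.
have vxy : v \in [set x; y] by rewrite -Euv set22.
move: neq_uv; case/set2P: uxy => ->; case/set2P: vxy => ->; rewrite ?eqxx //.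
all: by [left | right].
Qed.

Definition edge_rel F : rel V := fun u v => (u != v) && ([set u; v] \in F).

Lemma edge_rel_sym F : symmetric (edge_rel F).
Proof. by move=> u v; rewrite /edge_rel eq_sym setUC. Qed.

Lemma edge_rel_setD1 F f : subrel (edge_rel (F :\ f)) (edge_rel F).
Proof. by move=> u v /andP[neq_uv /setD1P[_ Fuv]]; rewrite /edge_rel neq_uv. Qed.

Lemma edge_rel_setD1_add F x y u v : edge_rel F u v ->
  edge_rel (F :\ [set x; y]) u v || (u \in [set x; y]) && (v \in [set x; y]).
Proof.
case/andP=> neq_uv Fuv; rewrite /edge_rel in_setD1 neq_uv Fuv andbT /=.
by case: eqP => [<-|]; rewrite ?set21 ?set22.
Qed.

Lemma n_comp_roots r : connect_sym r -> n_comp r V = #|[set root r z | z : V]|.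
Proof.
move=> sym_r; apply: eq_card => x; rewrite !inE andbT.
by apply/idP/imsetP => [/eqP <-|[z _ ->]]; [exists x | exact: roots_root].
Qed.

Lemma n_comp_edge_rel0 : n_comp (edge_rel set0) V = #|V|.
Proof.
apply: eq_card => x; rewrite !inE /roots andbT; apply/eqP.
case/connectP: (connect_root (edge_rel set0) x) => [[|y p]] //=.
by case/andP=> /andP[_]; rewrite inE.
Qed.

Lemma n_comp_connected r : connect_sym r -> (forall x y, connect r x y) ->
  n_comp r V = (0 < #|V|).
Proof.
move=> sym_r conn_r; case: (pickP (@predT V)) => [x0 _|V0].
  have -> : 0 < #|V| by apply/card_gt0P; exists x0.
  by rewrite /= -(n_comp_connect sym_r x0); apply: eq_n_comp_r => y; rewrite !inE conn_r.
have card_V0 : #|V| = 0 by apply: eq_card0 => x; apply: V0.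
by apply/eqP; rewrite card_V0 -leqn0 -card_V0 max_card.
Qed.

Lemma root_connect_add_edge r r' x y : connect_sym r' ->
  (forall u v, r u v -> r' u v || (u \in [set x; y]) && (v \in [set x; y])) ->
  forall z w, connect r z w ->
  (root r' z == root r' w) ||
  (root r' z \in [set root r' x; root r' y]) && (root r' w \in [set root r' x; root r' y]).
Proof.
move=> sym_r' r_sub z _ /connectP[p path_p ->].
elim: p z path_p => [|a p IHp] z /=; first by rewrite eqxx.
case/andP=> r_za p_a.
have root_xy u : u \in [set x; y] -> root r' u \in [set root r' x; root r' y].
  by case/set2P=> ->; rewrite ?set21 ?set22.
case/orP: (r_sub z a r_za) => [r'_za | /andP[zxy axy]].
  by rewrite (rootP sym_r' (connect1 r'_za)); exact: IHp.
by case/orP: (IHp a p_a) => [/eqP <- | /andP[_ ->]]; rewrite !root_xy ?orbT.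
Qed.

Lemma root_root_subrel r r' z : connect_sym r -> subrel r' r -> root r (root r' z) = root r z.
Proof.
move=> sym_r sub_r'; apply/esym/(rootP sym_r).
by apply: connect_sub (connect_root r' z) => u v /sub_r' /connect1.
Qed.

Lemma imset_root_subrel r r' : connect_sym r -> subrel r' r ->
  [set root r z | z : V] = root r @: [set root r' z | z : V].
Proof.
move=> sym_r sub_r'; rewrite -imset_comp; apply: eq_imset => z /=.
by rewrite root_root_subrel.
Qed.

Lemma n_comp_setD1_le F x y :
  n_comp (edge_rel (F :\ [set x; y])) V <= (n_comp (edge_rel F) V).+1.
Proof.
set r := edge_rel F; set r' := edge_rel (F :\ [set x; y]).
have sym_r : connect_sym r by apply/sym_connect_sym/edge_rel_sym.
have sym_r' : connect_sym r' by apply/sym_connect_sym/edge_rel_sym.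
rewrite !n_comp_roots // (imset_root_subrel sym_r (@edge_rel_setD1 F [set x; y])).
set R' := [set root r' z | z : V].
(* Adding the edge xy to r' merges at most the components of x and y. *)
have inj_root : {in R' :\ root r' y &, injective (root r)}.
  move=> u w /setD1P[ny /imsetP[a _ Ea]] /setD1P[nyb /imsetP[b _ Eb]]; subst u w.
  move/(rootP sym_r)/(root_connect_add_edge sym_r' (@edge_rel_setD1_add F x y)).
  rewrite !(root_root sym_r') !in_set2 (negbTE ny) (negbTE nyb) !orbF.
  by case/orP=> [/eqP | /andP[/eqP -> /eqP ->]].
rewrite (cardsD1 (root r' y)) -(card_in_imset inj_root) addnC -addn1.
by rewrite leq_add ?leq_b1 // subset_leq_card // imsetS // subD1set.
Qed.

Lemma n_comp_setD1_bridge F x y :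
  ~~ connect (edge_rel (F :\ [set x; y])) x y -> edge_rel F x y ->
  (n_comp (edge_rel F) V).+1 <= n_comp (edge_rel (F :\ [set x; y])) V.
Proof.
set r := edge_rel F; set r' := edge_rel (F :\ [set x; y]) => not_xy r_xy.
have sym_r : connect_sym r by apply/sym_connect_sym/edge_rel_sym.
have sym_r' : connect_sym r' by apply/sym_connect_sym/edge_rel_sym.
have sub_r' : subrel r' r := @edge_rel_setD1 F [set x; y].
rewrite !n_comp_roots // (imset_root_subrel sym_r sub_r') ltn_neqAle leq_imset_card andbT.
apply: contra not_xy => /imset_injP inj_root; apply/(rootP sym_r')/inj_root; rewrite ?imset_f //.
by rewrite !root_root_subrel //; apply/(rootP sym_r)/connect1.
Qed.

Lemma acyclic_subrel r r' : subrel r' r -> acyclic_graph r -> acyclic_graph r'.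
Proof.
move=> sub_r' acyc_r c uniq_c size_c.
by apply: contra (acyc_r c uniq_c size_c); apply: sub_cycle.
Qed.

Lemma acyclic_not_connect_setD1 F x y : acyclic_graph (edge_rel F) -> edge_rel F x y ->
  ~~ connect (edge_rel (F :\ [set x; y])) x y.
Proof.
move=> acyc r_xy; apply/negP=> /connectP[p path_p].
case: (shortenP path_p) => c path_c uniq_c _ last_y {p path_p}.
have cycle_c : cycle (edge_rel F) (x :: c).
  rewrite /cycle rcons_path -last_y edge_rel_sym r_xy andbT.
  exact: (sub_path (@edge_rel_setD1 F [set x; y])) path_c.
have : 2 < size (x :: c).
  case: c {uniq_c cycle_c} path_c last_y => [|a [|b c]] //= path_c y_last.
    by rewrite y_last /edge_rel eqxx in r_xy.
  by rewrite -y_last andbT /edge_rel setD11 andbF in path_c.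
by move/(acyc _ uniq_c); rewrite cycle_c.
Qed.

Lemma card_le_edges_add_n_comp F : {in F, forall f : {set V}, #|f| == 2} ->
  #|V| <= #|F| + n_comp (edge_rel F) V.
Proof.
have [n] := ubnP #|F|; elim: n F => // n IHn F /ltnSE le_Fn F2.
have [->|[f Ff]] := set_0Vmem F; first by rewrite cards0 n_comp_edge_rel0.
have /cards2P[x [y [_ Ef]]] := F2 f Ff; rewrite {f}Ef in Ff.
have card_F : #|F| = #|F :\ [set x; y]|.+1 by rewrite (cardsD1 [set x; y] F) Ff.
apply: leq_trans (IHn _ _ (sub_in1 (subsetP (subD1set F [set x; y])) F2)) _.
  by rewrite -ltnS -card_F.
by rewrite card_F addSn -addnS leq_add2l n_comp_setD1_le.
Qed.

Lemma edges_add_n_comp_le_card F : {in F, forall f : {set V}, #|f| == 2} ->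
  acyclic_graph (edge_rel F) -> #|F| + n_comp (edge_rel F) V <= #|V|.
Proof.
have [n] := ubnP #|F|; elim: n F => // n IHn F /ltnSE le_Fn F2 acyc.
have [->|[f Ff]] := set_0Vmem F; first by rewrite cards0 n_comp_edge_rel0.
have /cards2P[x [y [neq_xy Ef]]] := F2 f Ff; rewrite {f}Ef in Ff.
have card_F : #|F| = #|F :\ [set x; y]|.+1 by rewrite (cardsD1 [set x; y] F) Ff.
have r_xy : edge_rel F x y by rewrite /edge_rel neq_xy Ff.
have acyc' := acyclic_subrel (@edge_rel_setD1 F [set x; y]) acyc.
apply: leq_trans (IHn _ _ (sub_in1 (subsetP (subD1set F [set x; y])) F2) acyc'); last first.
  by rewrite -ltnS -card_F.
rewrite card_F addSn -addnS leq_add2l.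
exact: n_comp_setD1_bridge (acyclic_not_connect_setD1 acyc r_xy) r_xy.
Qed.

End Forests.

Section Edges.
Variables (V : finType) (e : rel V).
Implicit Types (A : {set V}) (x y : V).

Definition darts A := [set p : V * V | (p.1 \in A) && e p.1 p.2].

Definition edges_from A := [set [set p.1; p.2] | p in darts A].

Definition edge_set := edges_from setT.

Lemma card_darts A : #|darts A| = \sum_(x in A) deg e x.
Proof.
rewrite -sum1_card (eq_bigl (fun p : V * V => (p.1 \in A) && e p.1 p.2)) => [|p]; last first.
  by rewrite inE.
rewrite -(pair_big_dep (mem A) e (fun _ _ => 1)); apply: eq_bigr => x _.
by rewrite /deg -sum1_card; apply: eq_bigl => y; rewrite inE.
Qed.

Lemma card_edges_from A : irreflexive e -> {in A &, forall x y, ~~ e x y} ->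
  #|edges_from A| = #|darts A|.
Proof.
move=> irr_e indep_A; apply: card_in_imset => -[a b] [c d].
rewrite !inE /= => /andP[Aa e_ab] /andP[Ac e_cd] /esym E.
have neq_cd : c != d by apply: contraTneq e_cd => ->; rewrite irr_e.
case: (set2_eq neq_cd E) => [[-> ->] | [c_b _]] //.
by move: (indep_A a c Aa Ac); rewrite c_b e_ab.
Qed.

Lemma edges_from_sub A : edges_from A \subset edge_set.
Proof. by apply: imsetS; apply/subsetP => p; rewrite !inE => /andP[_ ->]. Qed.

Lemma edge_setP f : reflect (exists x y, e x y /\ f = [set x; y]) (f \in edge_set).
Proof.
apply: (iffP imsetP) => [[[x y]] | [x [y [e_xy ->]]]]; last by exists (x, y); rewrite // !inE.
by rewrite !inE => /= e_xy ->; exists x, y.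
Qed.

Lemma edge_set_card2 : irreflexive e -> {in edge_set, forall f : {set V}, #|f| == 2}.
Proof.
move=> irr_e f /edge_setP[x [y [e_xy ->]]]; rewrite cards2 eqSS eqb1.
by apply: contraTneq e_xy => ->; rewrite irr_e.
Qed.

Lemma edge_rel_edge_set : simple_graph e -> edge_rel edge_set =2 e.
Proof.
move=> [sym_e irr_e] u v; apply/andP/idP => [[neq_uv /edge_setP[x [y [e_xy Euv]]]] | e_uv].
  by case: (set2_eq neq_uv Euv) => -[-> ->]; rewrite // sym_e.
split; first by apply: contraTneq e_uv => ->; rewrite irr_e.
by apply/edge_setP; exists u, v.
Qed.

Lemma card_tree_edges : is_tree e -> #|edge_set| = #|V|.-1.
Proof.
move=> [simple_e conn_e acyc_e].
have E_e := edge_rel_edge_set simple_e.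
have F2 := edge_set_card2 simple_e.2.
have sym_E : connect_sym (edge_rel edge_set) by apply/sym_connect_sym/edge_rel_sym.
have n_comp_E : n_comp (edge_rel edge_set) V = (0 < #|V|).
  by apply: n_comp_connected => // x y; rewrite (eq_connect E_e).
have acyc_E : acyclic_graph (edge_rel edge_set).
  by move=> c uniq_c size_c; rewrite (eq_cycle E_e); apply: acyc_e.
have : #|edge_set| + (0 < #|V|) = #|V|.
  apply/anti_leq; rewrite -n_comp_E edges_add_n_comp_le_card //.
  exact: card_le_edges_add_n_comp.
by case: #|V| => [|n]; rewrite ?addn0 ?addn1; [move=> -> | case].
Qed.

Lemma edge_set_notin_edges_from A f x : symmetric e ->
  f \in edge_set :\: edges_from A -> x \in f -> x \notin A.
Proof.
move=> sym_e /setDP[/edge_setP[a [b [e_ab ->]]] not_from] /set2P[->|->].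
  by apply: contra not_from => Aa; apply/imsetP; exists (a, b); rewrite // inE Aa.
apply: contra not_from => Ab; apply/imsetP; exists (b, a); first by rewrite inE Ab sym_e.
by rewrite setUC.
Qed.

Lemma deg_le_max_deg x : deg e x <= max_deg e.
Proof. exact: leq_bigmax. Qed.

Lemma max_deg_gt0 : 0 < max_deg e -> 0 < #|V|.
Proof.
rewrite !lt0n; apply: contraNneq => /card0_eq V0.
by rewrite /max_deg big_pred0 // => x; apply: V0.
Qed.

Lemma n_deg_gt0 x : 0 < n_deg e (deg e x).
Proof. by apply/card_gt0P; exists x; rewrite inE. Qed.

Lemma m_deg_gt0 x y : e x y -> 0 < m_deg e (deg e x) (deg e y).
Proof.
move=> e_xy; apply/card_gt0P; exists [set x; y]; rewrite inE.
by apply/existsP; exists x; apply/existsP; exists y; rewrite e_xy !eqxx.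
Qed.

Lemma card_le_E_le (S : {set {set V}}) t : symmetric e -> S \subset edge_set ->
  {in S, forall f : {set V}, {in f, forall x, deg e x <= t}} -> #|S| <= E_le e t.
Proof.
move=> sym_e /subsetP S_E S_small.
pose M p q := [set f : {set V} | [exists x, exists y,
  [&& e x y, f == [set x; y], deg e x == p & deg e y == q]]].
have -> : E_le e t = \sum_(1 <= q < t.+1) \sum_(1 <= p < q.+1) #|M p q| by [].
apply: (@leq_trans (\sum_(1 <= q < t.+1) #|\bigcup_(1 <= p < q.+1) M p q|)); last first.
  by apply: leq_sum => q _; apply: leq_card_bigcup.
apply: leq_trans (leq_card_bigcup _ _ _); apply/subset_leq_card/subsetP => f Sf.
have /edge_setP[a [b [e_ab Ef]]] := S_E f Sf.
wlog le_ab : a b e_ab Ef / deg e a <= deg e b.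
  move=> wlog_ab; case: (leqP (deg e a) (deg e b)) => [|/ltnW]; first exact: wlog_ab.
  by apply: wlog_ab; rewrite 1?sym_e // Ef setUC.
have deg_a_gt0 : 0 < deg e a by apply/card_gt0P; exists b; rewrite inE.
apply: (mem_bigcup_seq (i := deg e b)).
  have small_b : deg e b <= t by apply: (S_small f Sf); rewrite Ef set22.
  by rewrite mem_index_iota ltnS small_b andbT (leq_trans deg_a_gt0).
apply: (mem_bigcup_seq (i := deg e a)); first by rewrite mem_index_iota ltnS le_ab deg_a_gt0.
by rewrite inE; apply/existsP; exists a; apply/existsP; exists b; rewrite e_ab Ef !eqxx.
Qed.

End Edges.

Theorem lemma4p4 (V : finType) (e : rel V) (Delta : nat) :
  is_tree e ->
  4 <= Delta ->
  max_deg e = Delta ->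
  Delta %| #|V| ->
  (forall i : nat, (Delta + 3)./2 < i < Delta -> n_deg e i = 0) ->
  m_deg e Delta Delta = 0 ->
  Delta - 1 <= E_le e (Delta + 3)./2.
Proof.
move=> tree_e le4D max_eD D_dvd gap mDD0; have [[sym_e irr_e] _ _] := tree_e.
set D := [set x | deg e x == Delta].
have indep_D : {in D &, forall x y, ~~ e x y}.
  move=> x y; rewrite !inE => /eqP Dx /eqP Dy; apply/negP => /m_deg_gt0.
  by rewrite Dx Dy mDD0.
have card_D : #|edges_from e D| = #|D| * Delta.
  rewrite card_edges_from // card_darts -sum_nat_const.
  by apply: eq_bigr => x; rewrite inE => /eqP.
have card_E := card_tree_edges tree_e.
have V_gt0 : 0 < #|V| by apply: (max_deg_gt0 (e := e)); rewrite max_eD; lia.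
have D_small : #|D|.+1 * Delta <= #|V|.
  apply: (dvdn_ltn_mul D_dvd); rewrite -card_D.
  by rewrite (leq_ltn_trans (subset_leq_card (edges_from_sub e D))) // card_E ltn_predL.
have rest_small : #|edge_set e :\: edges_from e D| <= E_le e (Delta + 3)./2.
  apply: card_le_E_le (subsetDl _ _) _ => // f rest_f x fx.
  have := edge_set_notin_edges_from sym_e rest_f fx; rewrite inE => deg_x.
  case: leqP => // t_lt; move: (n_deg_gt0 e x).
  by rewrite gap // t_lt ltn_neqAle deg_x -max_eD deg_le_max_deg.
rewrite cardsD (setIidPr (edges_from_sub e D)) card_E card_D in rest_small.
rewrite mulSn in D_small; lia.
Qed.
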